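(* Let $A$ be a $0$-$1$ matrix over a set $\mathcal G$. Under the isomorphism $\tilde R_A\cong C(\tilde\Gamma_A)$, $f\mapsto\hat f$, one has $\mathfrak R_A\cong C_0(\Gamma_A;\mathbb Z)$ and $\tilde{\mathfrak R}_A\cong C(\tilde\Gamma_A;\mathbb Z)$ (the integer-valued continuous functions, vanishing at infinity in the first case).
   Context: $\rho_i(j)=A(i,j)$ (rows of $A$) and $\delta_i=$ indicator of $\{i\}$, functions on $\mathcal G$. $R_A\subset\ell^\infty(\mathcal G)$ is the $C^*$-algebra generated by all $\rho_i,\delta_i$ and $\tilde R_A$ the one generated by these and $\mathbf 1$. $\mathfrak R_A\subset\mathbb Z^{\mathcal G}$ is the ring generated by $\{\delta_i,\rho_i:i\in\mathcal G\}$, and $\tilde{\mathfrak R}_A$ the ring generated by these and $\mathbf 1$. $\tilde{\mathcal G}=\mathcal G\cup\{\star\}$ is the one-point compactification of discrete $\mathcal G$; $c_j(i)=A(i,j)$; $\tilde\Gamma_A$ is the closure of $\{(j,c_j):j\in\mathcal G\}$ in $\tilde{\mathcal G}\times\{0,1\}^{\mathcal G}$ and $\Gamma_A=\tilde\Gamma_A\setminus\{(\star,\mathbf 0)\}$. It is known that, identifying $j$ with $(j,c_j)$, each $f\in\tilde R_A$ has a unique continuous extension $\hat f$ to $\tilde\Gamma_A$, and $f\mapsto\hat f$ is an isomorphism $\tilde R_A\cong C(\tilde\Gamma_A)$ carrying $R_A$ onto $C_0(\Gamma_A)$. *)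

From HB Require Import structures.
From mathcomp Require Import all_boot all_order all_algebra.
From mathcomp Require Import all_classical all_reals all_analysis.
Set Implicit Arguments. Unset Strict Implicit. Unset Printing Implicit Defensive.
Import Order.TTheory GRing.Theory Num.Theory.
Import numFieldNormedType.Exports.
Local Open Scope classical_set_scope.
Local Open Scope ring_scope.

Section Defs.
Variables (G : choiceType) (A : G -> G -> bool).

Definition rhoA (i : G) : G -> int := fun j => (A i j)%:Z.
Definition deltaA (i : G) : G -> int := fun j => (j == i)%:Z.

Inductive frakR : (G -> int) -> Prop :=
  | frakR_delta i : frakR (deltaA i)
  | frakR_rho i : frakR (rhoA i)
  | frakR_0 : frakR (fun _ => 0)
  | frakR_add f g : frakR f -> frakR g -> frakR (fun j => f j + g j)
  | frakR_opp f : frakR f -> frakR (fun j => - f j)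
  | frakR_mul f g : frakR f -> frakR g -> frakR (fun j => f j * g j).

Inductive frakRt : (G -> int) -> Prop :=
  | frakRt_delta i : frakRt (deltaA i)
  | frakRt_rho i : frakRt (rhoA i)
  | frakRt_1 : frakRt (fun _ => 1)
  | frakRt_0 : frakRt (fun _ => 0)
  | frakRt_add f g : frakRt f -> frakRt g -> frakRt (fun j => f j + g j)
  | frakRt_opp f : frakRt f -> frakRt (fun j => - f j)
  | frakRt_mul f g : frakRt f -> frakRt g -> frakRt (fun j => f j * g j).

(** tilde G : one-point compactification of discrete G (None = star). *)
Local Notation Gt := (one_point_compactification (discrete_topology G)).

Local Notation Amb := (Gt * {ptws G -> bool})%type.

Definition colA (j : G) : {ptws G -> bool} := fun i => A i j.

Definition embA (j : G) : Amb := (Some j : Gt, colA j).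

Definition GammatA : set Amb := closure (range embA).
Definition GammaA : set Amb :=
  GammatA `\` [set ((None : Gt), (fun _ => false) : {ptws G -> bool})].

End Defs.

Notation Gt G := (one_point_compactification (discrete_topology G)).
Notation Amb G := (Gt G * {ptws G -> bool})%type.

Definition CZ (R : realType) (G : choiceType) (X : set (Amb G)) (g : Amb G -> R) : Prop :=
  {within X, continuous g} /\ (forall x, X x -> g x \is a Num.int).

Definition C0Z (R : realType) (G : choiceType) (X : set (Amb G)) (g : Amb G -> R) : Prop :=
  CZ X g /\ (forall eps : R, 0 < eps -> compact [set x | X x /\ eps <= `|g x|]).

From HB Require Import structures.
From mathcomp Require Import all_boot all_order all_algebra.
From mathcomp Require Import all_classical all_reals all_analysis.
Import Order.TTheory GRing.Theory Num.Theory.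
Import numFieldNormedType.Exports.

Set Implicit Arguments.
Unset Strict Implicit.
Unset Printing Implicit Defensive.

Local Open Scope classical_set_scope.
Local Open Scope ring_scope.

(* The elements of the rings are traces on G, along j |-> (j, c_j), of locally
   constant integer functions on the compact space tilde G x {0,1}^G: delta_k and
   rho_i are the traces of [x.1 == Some k] and x.2 i, and a lift of an element of
   frak R_A vanishes at (star, 0).  Conversely a continuous integer-valued g is
   locally constant, and the space has a basis of clopen boxes {k} x C and
   (tilde G minus a finite set) x C, C a cylinder, whose indicators trace to
   products of delta_k, 1 - delta_k, rho_i and 1 - rho_i.  A box avoiding (star, 0)
   fits inside {x.1 = k} or {x.2 i = 1}, so its trace lies in frak R_A.  Covering the
   (compact) support of g by finitely many boxes on which g is constant and gluing
   the constants gives an element of the ring with trace g. *)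
Definition seq_filter (T : choiceType) : set_system (seq T) :=
  filter_from [set: seq T] (fun s0 => [set s | {subset s0 <= s}]).

Instance seq_filter_filter (T : choiceType) : Filter (@seq_filter T).
Proof.
apply: filter_from_filter; first by exists [::].
move=> s1 s2 _ _; exists (s1 ++ s2) => // s s12s.
by split=> x x_s; apply: s12s; rewrite mem_cat x_s ?orbT.
Qed.

Lemma compact_seq_subcover {T : topologicalType} (K : set T) (B : T -> set T) :
  compact K -> (forall x, K x -> nbhs x (B x)) ->
  exists2 s : seq T, (forall x, x \in s -> K x) &
    K `<=` \bigcup_(x in [set` s]) B x.
Proof.
move=> /compact_near_coveringP cK nbhsB.
have [x Kx|s0 _ covK] :=
  cK _ (@seq_filter T) (fun s y => exists2 x, x \in s & K x /\ B x y) _.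
- exists (B x, [set s | x \in s]); first split.
  + exact: nbhsB.
  + by exists [:: x] => // s; apply; exact: mem_head.
  + by case=> y s [/= Bxy xs]; exists x.
exists [seq x <- s0 | `[< K x >]] => [x|y /(covK s0 (fun x => id))[x xs [Kx Bxy]]].
  by rewrite mem_filter => /andP[/asboolP].
by exists x => //=; rewrite mem_filter xs andbT; exact/asboolP.
Qed.

Section one_point_discrete.
Context {G : choiceType}.
Implicit Types (s : seq G) (P : set (Gt G)).

Lemma compact_discrete_finite (C : set (discrete_topology G)) :
  compact C -> exists s : seq G, C `<=` [set` s].
Proof.
move=> /compact_seq_subcover/(_ (fun x _ => discrete_set1 x))[s _ covC].
by exists s => y /covC[x xs ->].
Qed.

Lemma nbhs_some (k : G) P : P (Some k) -> nbhs (Some k : Gt G) P.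
Proof.
move=> Pk; have sub : [set k] `<=` Some @^-1` P by move=> _ ->.
exact: filterS sub (discrete_set1 (k : discrete_topology G)).
Qed.

Lemma nbhs_none s P : ~` (Some @` [set` s]) `<=` P -> nbhs (None : Gt G) P.
Proof.
move=> sP; exists [set` s]; first split.
- exact/finite_compact/finite_seq.
- exact: discrete_closed.
move=> y [[k nsk <-] | ->]; apply: sP; last by case.
by move=> [k' sk' [e]]; apply: nsk; rewrite -e.
Qed.

Lemma nbhs_noneP P : nbhs (None : Gt G) P -> exists s, ~` (Some @` [set` s]) `<=` P.
Proof.
move=> [C [/compact_discrete_finite[s Cs] _] CP].
exists s => -[k|] nsk; apply: CP; last by right.
by left; exists k => // /Cs sk; apply: nsk; exists k.
Qed.

Lemma open_some_set1 (k : G) : open [set Some k : Gt G].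
Proof. by rewrite openE => _ ->; exact: nbhs_some. Qed.

Lemma open_cofinite s : open (~` (Some @` [set` s]) : set (Gt G)).
Proof. by rewrite openE => -[k|] nsk; [exact: nbhs_some | exact: (@nbhs_none s)]. Qed.

End one_point_discrete.

Section cylinders.
Context {G : choiceType}.
Implicit Types (c : {ptws G -> bool}) (S : seq G).

Definition cylinder c S : set {ptws G -> bool} :=
  [set d | forall i, i \in S -> d i = c i].

Lemma cylinder_cons c i S :
  cylinder c (i :: S) = [set d | d i = c i] `&` cylinder c S.
Proof.
apply/seteqP; split=> d.
  by move=> dS; split=> [|k kS]; apply: dS; rewrite inE ?eqxx ?kS ?orbT.
by move=> [di dS] k; rewrite inE => /orP[/eqP->|/dS].
Qed.

Lemma nbhs_cylinder c S : nbhs c (cylinder c S).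
Proof.
elim: S => [|i S IH].
  by apply: filterS filterT => d _ i.
rewrite cylinder_cons; apply: filterI IH.
apply: (@proj_continuous G (fun _ => bool) i c [set c i]).
by rewrite /= nbhs_principalE; exact/principal_filterP.
Qed.

Lemma open_cylinder c S : open (cylinder c S).
Proof.
rewrite openE => d dS.
rewrite (_ : cylinder c S = cylinder d S); first exact: nbhs_cylinder.
by apply/seteqP; split=> e eS k kS; rewrite eS // dS.
Qed.

Definition cylinder_filter c := filter_from [set: seq G] (cylinder c).

Instance cylinder_filter_filter c : Filter (cylinder_filter c).
Proof.
apply: filter_from_filter; first by exists [::].
move=> S1 S2 _ _; exists (S1 ++ S2) => // d dS.
by split=> i iS; apply: dS; rewrite mem_cat iS ?orbT.
Qed.

Lemma cylinder_filter_cvg c : cylinder_filter c --> c.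
Proof.
apply/cvg_sup => i N.
change (@nbhs _ (initial_topology (fun f : {ptws G -> bool} => f i)) c N ->
  cylinder_filter c N).
rewrite nbhsE => -[W [[B _ BW] Wc] WN].
exists [:: i] => // d di; apply: WN; rewrite -BW /= di ?mem_head //.
by move: Wc; rewrite -BW.
Qed.

Lemma nbhs_cylinderP c N : nbhs c N -> exists S, cylinder c S `<=` N.
Proof. by move=> /cylinder_filter_cvg[S _ SN]; exists S. Qed.

End cylinders.

Lemma compact_Amb (G : choiceType) : compact [set: Amb G].
Proof.
rewrite -setXTT; apply: compact_setX; first exact: one_point_compactification_compact.
have := @tychonoff G (fun _ => bool) (fun _ => setT) (fun _ => bool_compact).
by congr compact; apply/seteqP; split.
Qed.

Lemma compact_GammatA (G : choiceType) (A : G -> G -> bool) : compact (GammatA A).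
Proof. by apply: (subclosed_compact _ (@compact_Amb G)) => //; exact: closed_closure. Qed.

Section locally_constant.
Context {T : topologicalType}.

Definition locally_constant {V : Type} (h : T -> V) :=
  forall x, nbhs x [set y | h y = h x].

Lemma locally_constant_cst {V : Type} (v : V) : locally_constant (fun _ => v).
Proof. by move=> x; apply: filterS filterT. Qed.

Lemma locally_constant_comp {U V : Type} (F : U -> V) (h : T -> U) :
  locally_constant h -> locally_constant (F \o h).
Proof. by move=> lch x; apply: filterS (lch x) => y /= ->. Qed.

Lemma locally_constant2 {U1 U2 V : Type} (op : U1 -> U2 -> V)
    (h1 : T -> U1) (h2 : T -> U2) :
  locally_constant h1 -> locally_constant h2 ->
  locally_constant (fun x => op (h1 x) (h2 x)).
Proof. by move=> lc1 lc2 x; apply: filterS (filterI (lc1 x) (lc2 x)) => y [/= -> ->]. Qed.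

Lemma locally_constant_continuous {V : topologicalType} (h : T -> V) :
  locally_constant h -> continuous h.
Proof. by move=> lch x N /nbhs_singleton hxN; apply: filterS (lch x) => y /= ->. Qed.

Lemma locally_constant_closed {V : Type} (h : T -> V) (P : set V) :
  locally_constant h -> closed (h @^-1` P).
Proof. by move=> lch x /(_ _ (lch x))[y [/= Py <-]]. Qed.

End locally_constant.

Lemma locally_constant_precomp {S T : topologicalType} {V : Type}
    (h : S -> V) (f : T -> S) :
  locally_constant h -> continuous f -> locally_constant (h \o f).
Proof. by move=> lch cf x; exact: cf (lch (f x)). Qed.

Section lifting.
Context {G : choiceType} (A : G -> G -> bool).

Definition star_zero : Amb G := (None, fun _ => false).

Lemma locally_constant_eq_some (k : G) :
  locally_constant (fun y : Gt G => y == Some k).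
Proof.
case=> [k'|]; first exact: nbhs_some.
apply: (@nbhs_none _ [:: k]) => -[k'|] //= nk'; apply/eqP => -[kk'].
by apply: nk'; exists k; rewrite ?kk' ?mem_head.
Qed.

Lemma locally_constant_proj (i : G) :
  locally_constant (fun d : {ptws G -> bool} => d i).
Proof.
by move=> c; apply: filterS (nbhs_cylinder c [:: i]) => d; apply; rewrite mem_head.
Qed.

Definition delta_lift (k : G) (x : Amb G) : int := (x.1 == Some k)%:Z.
Definition rho_lift (i : G) (x : Amb G) : int := (x.2 i)%:Z.

Lemma locally_constant_delta_lift k : locally_constant (delta_lift k).
Proof.
apply: (locally_constant_comp (fun b : bool => b%:Z)).
by apply: locally_constant_precomp (locally_constant_eq_some k) _ => x; exact: cvg_fst.
Qed.

Lemma locally_constant_rho_lift i : locally_constant (rho_lift i).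
Proof.
apply: (locally_constant_comp (fun b : bool => b%:Z)).
by apply: locally_constant_precomp (locally_constant_proj i) _ => x; exact: cvg_snd.
Qed.

Lemma frakRt_lift f : frakRt A f ->
  exists2 h : Amb G -> int, locally_constant h & f = h \o embA A.
Proof.
elim=> [k|i| | |_ _ _ [h1 lc1 ->] _ [h2 lc2 ->]|_ _ [h lch ->]
        |_ _ _ [h1 lc1 ->] _ [h2 lc2 ->]].
- by exists (delta_lift k); [exact: locally_constant_delta_lift|].
- by exists (rho_lift i); [exact: locally_constant_rho_lift|].
- by exists (fun _ => 1); [exact: locally_constant_cst|].
- by exists (fun _ => 0); [exact: locally_constant_cst|].
- by exists (fun x => h1 x + h2 x); [exact: locally_constant2|].
- by exists (fun x => - h x); [exact: (locally_constant_comp -%R)|].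
- by exists (fun x => h1 x * h2 x); [exact: locally_constant2|].
Qed.

Lemma frakR_lift f : frakR A f ->
  exists2 h : Amb G -> int, locally_constant h & h star_zero = 0 /\ f = h \o embA A.
Proof.
elim=> [k|i| |_ _ _ [h1 lc1 [z1 ->]] _ [h2 lc2 [z2 ->]]|_ _ [h lch [z ->]]
        |_ _ _ [h1 lc1 [z1 ->]] _ [h2 lc2 [z2 ->]]].
- by exists (delta_lift k); [exact: locally_constant_delta_lift|].
- by exists (rho_lift i); [exact: locally_constant_rho_lift|].
- by exists (fun _ => 0); [exact: locally_constant_cst|].
- by exists (fun x => h1 x + h2 x); [exact: locally_constant2|rewrite /= z1 z2].
- by exists (fun x => - h x); [exact: (locally_constant_comp -%R)|rewrite /= z oppr0].
- by exists (fun x => h1 x * h2 x); [exact: locally_constant2|rewrite /= z1 mul0r].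
Qed.

Variable R : realType.

Lemma CZ_lift (X : set (Amb G)) (h : Amb G -> int) :
  locally_constant h -> CZ X (fun x => (h x)%:~R : R).
Proof.
move=> lch; split=> [|x _]; last exact: intr_int.
apply/continuous_subspaceT/locally_constant_continuous.
exact: (locally_constant_comp (fun z : int => z%:~R)).
Qed.

Lemma C0Z_lift (h : Amb G -> int) : locally_constant h -> h star_zero = 0 ->
  C0Z (GammaA A) (fun x => (h x)%:~R : R).
Proof.
move=> lch h0; split=> [|eps eps_gt0]; first exact: CZ_lift.
rewrite (_ : [set x | _] = GammatA A `&` h @^-1` [set z | eps <= `|z%:~R|]).
  by apply: compact_closedI; [exact: compact_GammatA | exact: locally_constant_closed].
apply/seteqP; split=> [x [[]]|x [Gx /= epsx]]//; split=> //; split=> // x0.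
by move: epsx; rewrite x0 h0 normr0 leNgt eps_gt0.
Qed.

End lifting.

Lemma open_setX {U V : topologicalType} (P : set U) (Q : set V) :
  open P -> open Q -> open (P `*` Q).
Proof.
rewrite !openE => oP oQ [a b] [/= Pa Qb].
by exists (P, Q) => //=; split; [exact: oP | exact: oQ].
Qed.

Section indicators.
Context {G : choiceType} (A : G -> G -> bool).
Implicit Types (B D : set (Amb G)) (h f : G -> int).

Definition emb_indic B (j : G) : int := \1_B (embA A j).

Lemma emb_indic1 B j : B (embA A j) -> emb_indic B j = 1.
Proof. by move=> Bj; rewrite /emb_indic indicE mem_set. Qed.

Lemma emb_indic0 B j : ~ B (embA A j) -> emb_indic B j = 0.
Proof. by move=> Bj; rewrite /emb_indic indicE memNset. Qed.

Lemma emb_indicT : emb_indic setT = fun _ => 1.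
Proof. by rewrite /emb_indic indicT. Qed.

Lemma emb_indicI B D : emb_indic (B `&` D) = fun j => emb_indic B j * emb_indic D j.
Proof. by rewrite /emb_indic indicI. Qed.

Lemma emb_indicC B : emb_indic (~` B) = fun j => 1 - emb_indic B j.
Proof. by apply/funext => j; rewrite /emb_indic indicC indicE; case: (_ \in _). Qed.

Lemma emb_indic_delta k : emb_indic [set y | y.1 = Some k] = deltaA k.
Proof.
apply/funext => j; rewrite /emb_indic /deltaA indicE natz.
suff -> : (embA A j \in [set y | y.1 = Some k]) = (j == k) by [].
by apply/idP/eqP; rewrite inE; [case | move=> ->].
Qed.

Lemma emb_indic_rho i : emb_indic [set y : Amb G | y.2 i] = rhoA A i.
Proof.
apply/funext => j; rewrite /emb_indic /rhoA indicE natz.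
by congr (Posz (nat_of_bool _)); apply/idP/idP; rewrite inE.
Qed.

Lemma frakR_ideal h f : frakRt A h -> frakR A f -> frakR A (fun j => h j * f j).
Proof.
move=> Rh; elim: Rh f => [k|i| | |h1 h2 _ IH1 _ IH2|h1 _ IH1|h1 h2 _ IH1 _ IH2] f Rf.
- exact: frakR_mul (frakR_delta A k) Rf.
- exact: frakR_mul (frakR_rho A i) Rf.
- by under eq_fun do rewrite mul1r.
- by under eq_fun do rewrite mul0r; exact: frakR_0.
- by under eq_fun do rewrite mulrDl; exact: frakR_add (IH1 _ Rf) (IH2 _ Rf).
- by under eq_fun do rewrite mulNr; exact: frakR_opp (IH1 _ Rf).
- by under eq_fun do rewrite -mulrA; exact: IH1 (IH2 _ Rf).
Qed.

Lemma frakR_indic_sub B D : frakRt A (emb_indic B) -> B `<=` D ->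
  frakR A (emb_indic D) -> frakR A (emb_indic B).
Proof. by move=> RB /setIidl {1}<- RD; rewrite emb_indicI; exact: frakR_ideal. Qed.

Lemma frakRt_indicI B D : frakRt A (emb_indic B) -> frakRt A (emb_indic D) ->
  frakRt A (emb_indic (B `&` D)).
Proof. by rewrite emb_indicI; exact: frakRt_mul. Qed.

Lemma frakRt_indicC B : frakRt A (emb_indic B) -> frakRt A (emb_indic (~` B)).
Proof. by rewrite emb_indicC => RB; exact: frakRt_add (frakRt_1 A) (frakRt_opp RB). Qed.

Lemma frakRt_indic_cylinder c S : frakRt A (emb_indic (snd @^-1` cylinder c S)).
Proof.
elim: S => [|i S IH].
  by rewrite (_ : _ @^-1` _ = setT) ?emb_indicT; [exact: frakRt_1 | exact/seteqP].
rewrite cylinder_cons preimage_setI; apply: frakRt_indicI IH.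
have Rrho : frakRt A (emb_indic [set y : Amb G | y.2 i]).
  by rewrite emb_indic_rho; exact: frakRt_rho.
case: (c i); first by rewrite (_ : _ @^-1` _ = [set y : Amb G | y.2 i]) //; exact/seteqP.
rewrite (_ : _ @^-1` _ = ~` [set y : Amb G | y.2 i]); first exact: frakRt_indicC.
by apply/seteqP; split=> y /=; case: (y.2 i).
Qed.

Lemma frakRt_indic_cofinite (s : seq G) :
  frakRt A (emb_indic (fst @^-1` (~` (Some @` [set` s]) : set (Gt G)))).
Proof.
elim: s => [|k s IH].
  rewrite (_ : _ @^-1` _ = setT) ?emb_indicT; first exact: frakRt_1.
  by apply/seteqP; split=> // y _ [].
rewrite (_ : _ @^-1` _ = ~` [set y | y.1 = Some k] `&` fst @^-1` ~` (Some @` [set` s])).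
  apply: frakRt_indicI IH; apply: frakRt_indicC.
  by rewrite emb_indic_delta; exact: frakRt_delta.
apply/seteqP; split=> y /=.
  move=> nks; split=> [yk|[k' sk' k'y]]; apply: nks; first by exists k; rewrite ?mem_head.
  by exists k'; rewrite // inE sk' orbT.
move=> [nyk nys] [k' /orP[/eqP kk'|sk'] k'y]; last by apply: nys; exists k'.
by apply: nyk; rewrite -k'y kk'.
Qed.

End indicators.

Section box_basis.
Context {G : choiceType} (A : G -> G -> bool).

Lemma box_basis (x : Amb G) (N : set (Amb G)) : nbhs x N ->
  exists B : set (Amb G), [/\ open B, B x, B `<=` N, frakRt A (emb_indic A B)
    & x <> star_zero -> frakR A (emb_indic A B)].
Proof.
case: x => a c [[N1 N2] /= [N1a /nbhs_cylinderP[S cylN2]] N12].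
have box (U : set (Gt G)) S' : open U -> U a -> U `<=` N1 -> {subset S <= S'} ->
    frakRt A (emb_indic A (fst @^-1` U)) ->
    [/\ open (U `*` cylinder c S'), (U `*` cylinder c S') (a, c),
        U `*` cylinder c S' `<=` N & frakRt A (emb_indic A (U `*` cylinder c S'))].
  move=> oU Ua UN1 SS' RU; split.
  - by apply: open_setX oU _; exact: open_cylinder.
  - by split=> // i.
  - by move=> y [/UN1 N1y S'y]; apply: N12; split=> //; apply: cylN2 => i /SS'/S'y.
  - by apply: frakRt_indicI RU _; exact: frakRt_indic_cylinder.
case: a N1a box => [k|] N1a box.
  have kN1 : [set Some k] `<=` N1 by move=> _ ->; exact: nbhs_singleton N1a.
  have Rk : frakRt A (emb_indic A (fst @^-1` [set Some k])).
    by rewrite /preimage emb_indic_delta; exact: frakRt_delta.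
  have [oB Bx BN RB] := box _ S (@open_some_set1 _ k) erefl kN1 (fun _ => id) Rk.
  exists ([set Some k] `*` cylinder c S); split=> // _.
  apply: frakR_indic_sub RB (_ : _ `<=` [set y | y.1 = Some k]) _ => [y [] //|].
  by rewrite emb_indic_delta; exact: frakR_delta.
have [s sN1] := nbhs_noneP N1a.
have s_none : (~` (Some @` [set` s]) : set (Gt G)) None by case.
have cof_box S' := box _ S' (@open_cofinite _ s) s_none sN1.
have [[i ci]|c0] := pselect (exists i, c i).
  have [||oB Bx BN RB] := cof_box (i :: S).
  - by move=> k kS; rewrite inE kS orbT.
  - exact: frakRt_indic_cofinite.
  exists (~` (Some @` [set` s]) `*` cylinder c (i :: S)); split=> // _.
  (* the coordinate [i] with [c i] keeps the box away from (star, 0) *)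
  apply: frakR_indic_sub RB (_ : _ `<=` [set y : Amb G | y.2 i]) _.
    by move=> y [_ yS]; rewrite /= yS ?mem_head.
  by rewrite emb_indic_rho; exact: frakR_rho.
have [||oB Bx BN RB] := cof_box S.
- by [].
- exact: frakRt_indic_cofinite.
exists (~` (Some @` [set` s]) `*` cylinder c S); split=> // -[].
by congr pair; apply/funext => i; apply/negP => ci; apply: c0; exists i.
Qed.

End box_basis.

Lemma int_num_norm_lt1 {R : archiNumDomainType} (x : R) :
  x \is a Num.int -> `|x| < 1 -> x = 0.
Proof. by move=> xi; apply: contraTeq => /(norm_intr_ge1 xi)/le_gtF ->. Qed.

Lemma int_locally_constant_within {T : topologicalType} {R : realType}
    (X : set T) (g : T -> R) :
  {within X, continuous g} -> (forall x, X x -> g x \is a Num.int) ->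
  forall x, X x -> nbhs x [set y | X y -> g y = g x].
Proof.
move=> cg gint x Xx.
have near_gx := (subspace_continuousP X g).1 cg x Xx _ (@nbhsx_ballx R R (g x) 1 ltr01).
have sub : [set y | X y -> ball (g x) 1 (g y)] `<=` [set y | X y -> g y = g x].
  move=> y /= gxy Xy; apply/esym/subr0_eq/int_num_norm_lt1; last exact: gxy.
  by rewrite rpredB ?gint.
exact: filterS sub near_gx.
Qed.

Section patching.
Variables (R : realType) (G : choiceType) (A : G -> G -> bool) (P : (G -> int) -> Prop).
Hypotheses (PD : forall f h, P f -> P h -> P (fun j => f j + h j))
  (PN : forall f, P f -> P (fun j => - f j))
  (PM : forall f h, P f -> P h -> P (fun j => f j * h j))
  (P0 : P (fun _ => 0)).

Lemma P_zscale (z : int) f : P f -> P (fun j => z * f j).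
Proof.
move=> Pf; have Pn (n : nat) : P (fun j => n%:Z * f j).
  elim: n => [|n IH]; first by under eq_fun do rewrite mul0r.
  by under eq_fun do rewrite -addn1 PoszD mulrDl mul1r; exact: PD.
case: z => n; first exact: Pn.
by under eq_fun do rewrite NegzE mulNr; exact: PN.
Qed.

Section patch.
Variables (B : Amb G -> set (Amb G)) (v : Amb G -> int).

(* [v x] on the trace of [B x] and [patch s'] off it; written without the
   constant 1, which frak R_A lacks. *)
Fixpoint patch (s : seq (Amb G)) : G -> int :=
  if s is x :: s' then fun j =>
    v x * emb_indic A (B x) j + (patch s' j - emb_indic A (B x) j * patch s' j)
  else fun _ => 0.

Lemma P_patch s : (forall x, x \in s -> P (emb_indic A (B x))) -> P (patch s).
Proof.
elim: s => [|x s IH] Ps //=.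
have Px := Ps x (mem_head x s).
have {}IH := IH (fun y ys => Ps y (@mem_behead _ (x :: s) y ys)).
by apply: PD (P_zscale _ Px) (PD IH (PN (PM Px IH))).
Qed.

Lemma patch_in (g : Amb G -> R) s j :
  (forall x, x \in s -> B x (embA A j) -> g (embA A j) = (v x)%:~R) ->
  (exists2 x, x \in s & B x (embA A j)) -> (patch s j)%:~R = g (embA A j).
Proof.
elim: s => [|x s IH] gv [y] //=; rewrite inE.
have [Bxj|nBxj] := pselect (B x (embA A j)).
  by rewrite emb_indic1 // mulr1 mul1r subrr addr0 (gv x) ?mem_head.
rewrite emb_indic0 // mulr0 mul0r subr0 add0r => /orP[/eqP->|ys] Byj //.
by apply: IH => [z zs|]; [apply: gv; rewrite inE zs orbT | exists y].
Qed.

Lemma patch_out s j : (forall x, x \in s -> ~ B x (embA A j)) -> patch s j = 0.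
Proof.
elim: s => [|x s IH] nB //=.
rewrite emb_indic0 ?mulr0 ?mul0r ?subr0 ?add0r; last exact/nB/mem_head.
by apply: IH => y ys; apply: nB; rewrite inE ys orbT.
Qed.

End patch.

Lemma lift_by_patching (X K : set (Amb G)) (g : Amb G -> R) :
  compact K -> K `<=` X -> (forall j, X (embA A j)) ->
  (forall x, X x -> g x \is a Num.int) ->
  (forall x, K x -> exists B, [/\ open B, B x,
     (forall y, B y -> X y -> g y = g x) & P (emb_indic A B)]) ->
  (forall j, ~ K (embA A j) -> g (embA A j) = 0) ->
  exists f, P f /\ forall j, g (embA A j) = (f j)%:~R.
Proof.
move=> cK KX Xemb gint Kloc gout.
have /choice[B Bloc] : forall x, exists Bx : set (Amb G), K x ->
    [/\ open Bx, Bx x, (forall y, Bx y -> X y -> g y = g x) & P (emb_indic A Bx)].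
  by move=> x; have [/Kloc[Bx ?]|] := pselect (K x); [exists Bx | exists set0].
have nbhsB x : K x -> nbhs x (B x).
  by case/Bloc => oB Bx _ _; exact: open_nbhs_nbhs.
have [s sK covK] := compact_seq_subcover cK nbhsB.
exists (patch B (fun x => Num.floor (g x)) s); split.
  by apply: P_patch => x /sK/Bloc[].
move=> j; have [Bj|nBj] := pselect (exists2 x, x \in s & B x (embA A j)).
  apply/esym/(patch_in _ Bj) => x /sK Kx Bxj; have [_ _ gB _] := Bloc x Kx.
  by rewrite (gB _ Bxj (Xemb j)) floorK //; apply/gint/KX.
rewrite patch_out ?gout // => [Kj|x xs Bxj]; apply: nBj; last by exists x.
by have [x xs Bxj] := covK _ Kj; exists x.
Qed.

End patching.

Section traces.
Variables (R : realType) (G : choiceType) (A : G -> G -> bool).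

Lemma embA_GammatA j : GammatA A (embA A j).
Proof. by apply: subset_closure; exists j. Qed.

Lemma embA_GammaA j : GammaA A (embA A j).
Proof. by split; [exact: embA_GammatA | case]. Qed.

Lemma frakRt_CZ f : frakRt A f ->
  exists g : Amb G -> R, CZ (GammatA A) g /\ forall j, g (embA A j) = (f j)%:~R.
Proof.
by move=> /frakRt_lift[h lch ->]; exists (fun x => (h x)%:~R); split; [exact: CZ_lift|].
Qed.

Lemma frakR_C0Z f : frakR A f ->
  exists g : Amb G -> R, C0Z (GammaA A) g /\ forall j, g (embA A j) = (f j)%:~R.
Proof.
move=> /frakR_lift[h lch [h0 ->]].
by exists (fun x => (h x)%:~R); split; [exact: C0Z_lift|].
Qed.

Lemma CZ_frakRt (g : Amb G -> R) : CZ (GammatA A) g ->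
  exists f, frakRt A f /\ forall j, g (embA A j) = (f j)%:~R.
Proof.
move=> [cg gint].
apply: (lift_by_patching (@frakRt_add _ A) (@frakRt_opp _ A) (@frakRt_mul _ A)
  (frakRt_0 A) (X := GammatA A) (compact_GammatA (A := A))) => //.
- exact: embA_GammatA.
- move=> x Xx.
  have [B [oB Bx BN RB _]] := box_basis A (int_locally_constant_within cg gint Xx).
  by exists B; split=> // y /BN.
- by move=> j []; exact: embA_GammatA.
Qed.

Lemma C0Z_frakR (g : Amb G -> R) : C0Z (GammaA A) g ->
  exists f, frakR A f /\ forall j, g (embA A j) = (f j)%:~R.
Proof.
move=> [[cg gint] cpt].
apply: (lift_by_patching (@frakR_add _ A) (@frakR_opp _ A) (@frakR_mul _ A)
  (frakR_0 A) (X := GammaA A) (cpt 1 ltr01)) => //.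
- by move=> x [].
- exact: embA_GammaA.
- move=> x [Xx _]; have [_ x_star] := Xx.
  have [B [oB Bx BN _ RB]] := box_basis A (int_locally_constant_within cg gint Xx).
  by exists B; split=> //; apply: RB.
- move=> j nK; apply: int_num_norm_lt1 (gint _ (embA_GammaA j)) _.
  by rewrite ltNge; apply/negP => g1; apply: nK; split; [exact: embA_GammaA|].
Qed.

End traces.

Theorem proposition4p2 (R : realType) (G : choiceType) (A : G -> G -> bool) :
  ((forall f : G -> int, frakR A f ->
      exists g : Amb G -> R, C0Z (GammaA A) g /\ forall j, g (embA A j) = (f j)%:~R)
   /\ (forall g : Amb G -> R, C0Z (GammaA A) g ->
      exists f : G -> int, frakR A f /\ forall j, g (embA A j) = (f j)%:~R))
  /\
  ((forall f : G -> int, frakRt A f ->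
      exists g : Amb G -> R, CZ (GammatA A) g /\ forall j, g (embA A j) = (f j)%:~R)
   /\ (forall g : Amb G -> R, CZ (GammatA A) g ->
      exists f : G -> int, frakRt A f /\ forall j, g (embA A j) = (f j)%:~R)).
Proof.
split; split=> ?; [exact: frakR_C0Z | exact: C0Z_frakR | exact: frakRt_CZ | exact: CZ_frakRt].
Qed.
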